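(* Let $\mathcal C$ be a pointed exact Mal'tsev category and let $(C_1,C_0,d,c,e)$ be a reflexive graph in $\mathcal C$. Then the pushout of $d$ and $c$ exists, and $(d,c)\colon C_1\to C_0\times C_0$ is an epimorphism if and only if this pushout $\pi_0(C)$ is a zero object. Moreover, in that case $(d,c)$ is a regular epimorphism.
   Context: A reflexive graph $(C_1,C_0,d,c,e)$ consists of morphisms $d,c\colon C_1\to C_0$ and $e\colon C_0\to C_1$ with $d\circ e=c\circ e=1_{C_0}$. A Mal'tsev category is a finitely complete category in which every reflexive relation is an equivalence relation; exact means Barr-exact. *)

Record Category : Type := {
  Ob :> Type;
  Hom : Ob -> Ob -> Type;
  idm : forall X, Hom X X;
  comp : forall {X Y Z}, Hom Y Z -> Hom X Y -> Hom X Z;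
  comp_assoc : forall X Y Z W (h : Hom Z W) (g : Hom Y Z) (f : Hom X Y),
      comp h (comp g f) = comp (comp h g) f;
  comp_id_l : forall X Y (f : Hom X Y), comp (idm Y) f = f;
  comp_id_r : forall X Y (f : Hom X Y), comp f (idm X) = f
}.

Arguments Hom {C} X Y : rename.
Arguments idm {C} X : rename.
Arguments comp {C X Y Z} g f : rename.

Section Notions.
Context {C : Category}.

Definition Mono {X Y : C} (f : Hom X Y) : Prop :=
  forall Z (a b : Hom Z X), comp f a = comp f b -> a = b.

Definition Epi {X Y : C} (f : Hom X Y) : Prop :=
  forall Z (a b : Hom Y Z), comp a f = comp b f -> a = b.

Definition IsTerminal (T : C) : Prop :=
  forall X : C, exists u : Hom X T, forall v : Hom X T, v = u.

Definition IsInitial (I : C) : Prop :=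
  forall X : C, exists u : Hom I X, forall v : Hom I X, v = u.

Definition IsZeroObject (Z : C) : Prop := IsInitial Z /\ IsTerminal Z.

Definition Pointed : Prop := exists Z : C, IsZeroObject Z.

Definition IsProduct {A B P : C} (p1 : Hom P A) (p2 : Hom P B) : Prop :=
  forall Z (a : Hom Z A) (b : Hom Z B),
    exists u : Hom Z P, (comp p1 u = a /\ comp p2 u = b) /\
      forall v : Hom Z P, comp p1 v = a -> comp p2 v = b -> v = u.

Definition IsPullback {A B X P : C} (f : Hom A X) (g : Hom B X)
    (p1 : Hom P A) (p2 : Hom P B) : Prop :=
  comp f p1 = comp g p2 /\
  forall Z (a : Hom Z A) (b : Hom Z B), comp f a = comp g b ->
    exists u : Hom Z P, (comp p1 u = a /\ comp p2 u = b) /\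
      forall v : Hom Z P, comp p1 v = a -> comp p2 v = b -> v = u.

Definition IsPushout {X A B Q : C} (f : Hom X A) (g : Hom X B)
    (q1 : Hom A Q) (q2 : Hom B Q) : Prop :=
  comp q1 f = comp q2 g /\
  forall Z (a : Hom A Z) (b : Hom B Z), comp a f = comp b g ->
    exists u : Hom Q Z, (comp u q1 = a /\ comp u q2 = b) /\
      forall v : Hom Q Z, comp v q1 = a -> comp v q2 = b -> v = u.

Definition IsCoequalizer {X Y Q : C} (f g : Hom X Y) (q : Hom Y Q) : Prop :=
  comp q f = comp q g /\
  forall Z (a : Hom Y Z), comp a f = comp a g ->
    exists u : Hom Q Z, comp u q = a /\
      forall v : Hom Q Z, comp v q = a -> v = u.

Definition RegularEpi {Y Q : C} (q : Hom Y Q) : Prop :=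
  exists (X : C) (f g : Hom X Y), IsCoequalizer f g q.

Definition FinitelyComplete : Prop :=
  (exists T : C, IsTerminal T) /\
  forall (A B X : C) (f : Hom A X) (g : Hom B X),
    exists (P : C) (p1 : Hom P A) (p2 : Hom P B), IsPullback f g p1 p2.

(* Internal relations on X: jointly monic pairs r1, r2 : R -> X *)
Definition IsRelation {R X : C} (r1 r2 : Hom R X) : Prop :=
  forall Z (a b : Hom Z R), comp r1 a = comp r1 b -> comp r2 a = comp r2 b -> a = b.

Definition Reflexive {R X : C} (r1 r2 : Hom R X) : Prop :=
  exists s : Hom X R, comp r1 s = idm X /\ comp r2 s = idm X.

Definition Symmetric {R X : C} (r1 r2 : Hom R X) : Prop :=
  exists t : Hom R R, comp r1 t = r2 /\ comp r2 t = r1.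

Definition Transitive {R X : C} (r1 r2 : Hom R X) : Prop :=
  forall (P : C) (p1 p2 : Hom P R), IsPullback r2 r1 p1 p2 ->
    exists m : Hom P R, comp r1 m = comp r1 p1 /\ comp r2 m = comp r2 p2.

Definition EquivalenceRelation {R X : C} (r1 r2 : Hom R X) : Prop :=
  IsRelation r1 r2 /\ Reflexive r1 r2 /\ Symmetric r1 r2 /\ Transitive r1 r2.

Definition Maltsev : Prop :=
  FinitelyComplete /\
  forall (R X : C) (r1 r2 : Hom R X),
    IsRelation r1 r2 -> Reflexive r1 r2 -> EquivalenceRelation r1 r2.

Definition Regular : Prop :=
  FinitelyComplete /\
  (forall (X Y R : C) (f : Hom X Y) (r1 r2 : Hom R X),
      IsPullback f f r1 r2 -> exists (Q : C) (q : Hom X Q), IsCoequalizer r1 r2 q) /\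
  (forall (A B D P : C) (f : Hom A B) (g : Hom D B) (p1 : Hom P D) (p2 : Hom P A),
      RegularEpi f -> IsPullback g f p1 p2 -> RegularEpi p1).

Definition Exact : Prop :=
  Regular /\
  forall (R X : C) (r1 r2 : Hom R X), EquivalenceRelation r1 r2 ->
    exists (Y : C) (f : Hom X Y), IsPullback f f r1 r2.

End Notions.


(* Factor (d,c) = n ∘ m with m a regular epimorphism and n a monomorphism.  The
   image of n is a reflexive relation on C0 (e gives reflexivity), hence, by the
   Mal'tsev property and exactness, the kernel pair of some f : C0 -> Y.  Its
   coequalizer q also coequalizes d and c (m is epi), and since d and c have the
   common section e, a coequalizer of d and c is the same as a pushout of d and c
   with equal legs.  If (d,c) is epi, then q ∘ p1 = q ∘ p2 for the product
   projections, so q factors through the zero object (via C0 -> C0 × C0 with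
   components 1 and 0) and, being epi, has a zero codomain.  Conversely, if the
   pushout is zero then f factors through a terminal object, so its kernel pair
   is all of C0 × C0, n is an isomorphism and (d,c) = n ∘ m is a regular epi. *)

Section Categories.
Context {C : Category}.

Lemma regular_epi_epi {Y Q : C} (q : Hom Y Q) : RegularEpi q -> Epi q.
Proof.
  intros (X & f & g & Hfg & Hu) Z a b Hab.
  destruct (Hu Z (comp a q)) as (u & _ & Huniq).
  { rewrite <- !comp_assoc, Hfg. reflexivity. }
  rewrite (Huniq a eq_refl). symmetry. apply Huniq. symmetry. exact Hab.
Qed.

Lemma coequalizer_precomp_epi {W X Y Q : C} (m : Hom W X) (r1 r2 : Hom X Y)
    (q : Hom Y Q) :
  Epi m -> IsCoequalizer r1 r2 q -> IsCoequalizer (comp r1 m) (comp r2 m) q.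
Proof.
  intros Em [Hq Hu]. split.
  - rewrite !comp_assoc, Hq. reflexivity.
  - intros Z a Ha. apply Hu, Em. rewrite <- !comp_assoc. exact Ha.
Qed.

Lemma regular_epi_comp_iso {X I P : C} (m : Hom X I) (n : Hom I P) (g : Hom P I) :
  comp n g = idm P -> comp g n = idm I -> RegularEpi m -> RegularEpi (comp n m).
Proof.
  intros Hng Hgn (W & f1 & f2 & Hm & Hu).
  exists W, f1, f2. split.
  - rewrite <- !comp_assoc, Hm. reflexivity.
  - intros Z a Ha. destruct (Hu Z a Ha) as (u & Hum & Huniq).
    exists (comp u g). split.
    + rewrite <- comp_assoc, (comp_assoc _ _ _ _ _ g n m), Hgn, comp_id_l. exact Hum.
    + intros v Hv. rewrite <- (Huniq (comp v n)).
      * rewrite <- comp_assoc, Hng, comp_id_r. reflexivity.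
      * rewrite <- comp_assoc. exact Hv.
Qed.

Section RegularCategory.
Hypothesis HReg : Regular (C := C).

Lemma regular_epi_cover_lift {X I Z : C} (m : Hom X I) (x : Hom Z I) :
  RegularEpi m ->
  exists (A : C) (a : Hom A Z) (a' : Hom A X), RegularEpi a /\ comp m a' = comp x a.
Proof.
  destruct HReg as [[_ Hpb] [_ Hstable]]. intros Rm.
  destruct (Hpb Z X I x m) as (A & a & a' & HA).
  exists A, a, a'. split.
  - exact (Hstable _ _ _ _ m x a a' Rm HA).
  - symmetry. exact (proj1 HA).
Qed.

Lemma kernel_pair_coequalizer_mono {X P K I : C} (h : Hom X P) (k1 k2 : Hom K X)
    (m : Hom X I) (n : Hom I P) :
  IsPullback h h k1 k2 -> IsCoequalizer k1 k2 m -> comp n m = h -> Mono n.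
Proof.
  intros HK Hm Hnm Z x y Hxy.
  assert (Rm : RegularEpi m) by (exists K, k1, k2; exact Hm).
  destruct (regular_epi_cover_lift m x Rm) as (A & a & a' & Ra & Ha).
  destruct (regular_epi_cover_lift m (comp y a) Rm) as (B & b & b' & Rb & Hb).
  assert (Hh : comp h (comp a' b) = comp h b').
  { rewrite <- Hnm, <- !comp_assoc, (comp_assoc _ _ _ _ _ m a' b), Ha, Hb,
      !comp_assoc, Hxy. reflexivity. }
  destruct (proj2 HK B (comp a' b) b' Hh) as (t & [Ht1 Ht2] & _).
  apply (regular_epi_epi a Ra), (regular_epi_epi b Rb).
  rewrite <- Hb, <- Ha, <- comp_assoc, <- Ht1, <- Ht2, !comp_assoc, (proj1 Hm).
  reflexivity.
Qed.

Lemma regular_image_factorization {X P : C} (h : Hom X P) :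
  exists (I : C) (m : Hom X I) (n : Hom I P), RegularEpi m /\ Mono n /\ comp n m = h.
Proof.
  pose proof HReg as [[_ Hpb] [Hcoeq _]].
  destruct (Hpb X X P h h) as (K & k1 & k2 & HK).
  destruct (Hcoeq X P K h k1 k2 HK) as (I & m & Hm).
  destruct (proj2 Hm P h (proj1 HK)) as (n & Hnm & _).
  exists I, m, n. repeat split.
  - exists K, k1, k2. exact Hm.
  - exact (kernel_pair_coequalizer_mono h k1 k2 m n HK Hm Hnm).
  - exact Hnm.
Qed.

End RegularCategory.

Lemma product_exists : FinitelyComplete (C := C) -> forall A B : C,
  exists (P : C) (p1 : Hom P A) (p2 : Hom P B), IsProduct p1 p2.
Proof.
  intros [[T HT] Hpb] A B.
  destruct (HT A) as (tA & _). destruct (HT B) as (tB & _).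
  destruct (Hpb A B T tA tB) as (P & p1 & p2 & [_ HP]).
  exists P, p1, p2. intros Z a b. apply HP.
  destruct (HT Z) as (tZ & HtZ). rewrite (HtZ (comp tA a)), (HtZ (comp tB b)).
  reflexivity.
Qed.

Lemma mono_into_product_relation {A P I : C} (p1 p2 : Hom P A) (n : Hom I P) :
  IsProduct p1 p2 -> Mono n -> IsRelation (comp p1 n) (comp p2 n).
Proof.
  intros HP Mn W a b E1 E2. apply Mn.
  destruct (HP W (comp (comp p1 n) a) (comp (comp p2 n) a)) as (u & _ & Hu).
  rewrite (Hu (comp n a)), (Hu (comp n b)); rewrite ?comp_assoc; auto.
Qed.

Lemma product_comparison_iso {A B P R : C} (p1 : Hom P A) (p2 : Hom P B) (n : Hom R P) :
  IsProduct p1 p2 -> IsProduct (comp p1 n) (comp p2 n) ->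
  exists g : Hom P R, comp n g = idm P /\ comp g n = idm R.
Proof.
  intros HP HR.
  destruct (HR P p1 p2) as (g & [G1 G2] & _).
  exists g. split.
  - destruct (HP P p1 p2) as (u & _ & Hu).
    rewrite (Hu (comp n g)), (Hu (idm P)); try reflexivity;
      rewrite ?comp_id_r, ?comp_assoc, ?G1, ?G2; reflexivity.
  - destruct (HR R (comp p1 n) (comp p2 n)) as (u & _ & Hu).
    rewrite (Hu (comp g n)), (Hu (idm R)); try reflexivity;
      rewrite ?comp_id_r, ?comp_assoc, ?G1, ?G2; reflexivity.
Qed.

Lemma pullback_through_terminal_is_product {A B Y T R : C} (f : Hom A Y) (g : Hom B Y)
    (r1 : Hom R A) (r2 : Hom R B) (u : Hom T Y) (s : Hom A T) (t : Hom B T) :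
  IsTerminal T -> f = comp u s -> g = comp u t -> IsPullback f g r1 r2 ->
  IsProduct r1 r2.
Proof.
  intros HT Hf Hg Hpb W a b. apply (proj2 Hpb).
  destruct (HT W) as (tW & HtW).
  rewrite Hf, Hg, <- !comp_assoc, (HtW (comp s a)), (HtW (comp t b)).
  reflexivity.
Qed.

Lemma factors_through_zero_of_coequalizes_projections {A P Q Z : C}
    (p1 p2 : Hom P A) (q : Hom A Q) :
  IsZeroObject Z -> IsProduct p1 p2 -> comp q p1 = comp q p2 ->
  exists (t : Hom A Z) (w : Hom Z Q), q = comp w t.
Proof.
  intros [HZi HZt] HP Hq.
  destruct (HZt A) as (t & _). destruct (HZi A) as (z & _).
  destruct (HP A (idm A) (comp z t)) as (j & [Hj1 Hj2] & _).
  exists t, (comp q z).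
  rewrite <- comp_assoc, <- Hj2, comp_assoc, <- Hq, <- comp_assoc, Hj1, comp_id_r.
  reflexivity.
Qed.

Lemma epi_through_zero_codomain_zero {X Q Z : C} (t : Hom X Z) (w : Hom Z Q) :
  IsZeroObject Z -> Epi (comp w t) -> IsZeroObject Q.
Proof.
  intros [HZi HZt] Eq.
  destruct (HZt Q) as (s & _).
  assert (Hsw : comp s w = idm Z).
  { destruct (HZi Z) as (uZ & HuZ). rewrite (HuZ (comp s w)), (HuZ (idm Z)).
    reflexivity. }
  assert (Hws : comp w s = idm Q).
  { apply Eq. rewrite comp_id_l, <- comp_assoc, (comp_assoc _ _ _ _ _ s w t), Hsw,
      comp_id_l. reflexivity. }
  split.
  - intros Y. destruct (HZi Y) as (zY & HzY).
    exists (comp zY s). intros v. apply Eq. rewrite !comp_assoc.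
    rewrite (HzY (comp v w)), (HzY (comp (comp zY s) w)). reflexivity.
  - intros Y. destruct (HZt Y) as (tY & HtY).
    exists (comp w tY). intros v.
    rewrite <- (comp_id_l _ _ _ v), <- Hws, <- comp_assoc, (HtY (comp s v)).
    reflexivity.
Qed.

Section ReflexiveGraph.
Context {C1 C0 : C} (d c : Hom C1 C0) (e : Hom C0 C1).
Hypotheses (Hd : comp d e = idm C0) (Hc : comp c e = idm C0).

Lemma reflexive_pushout_legs_eq {Q : C} (q1 q2 : Hom C0 Q) :
  IsPushout d c q1 q2 -> q1 = q2.
Proof.
  intros [Hq _].
  rewrite <- (comp_id_r _ _ _ q1), <- Hd, comp_assoc, Hq, <- comp_assoc, Hc, comp_id_r.
  reflexivity.
Qed.

Lemma reflexive_pushout_epi {Q : C} (q1 q2 : Hom C0 Q) :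
  IsPushout d c q1 q2 -> Epi q1.
Proof.
  intros HQ Z a b Hab.
  pose proof (reflexive_pushout_legs_eq q1 q2 HQ) as E12. subst q2.
  destruct HQ as [Hq Hu].
  destruct (Hu Z (comp a q1) (comp a q1)) as (u & _ & Huniq).
  { rewrite <- !comp_assoc, Hq. reflexivity. }
  rewrite (Huniq a eq_refl eq_refl). symmetry. apply Huniq; symmetry; exact Hab.
Qed.

Lemma reflexive_coequalizer_pushout {Q : C} (q : Hom C0 Q) :
  IsCoequalizer d c q -> IsPushout d c q q.
Proof.
  intros [Hq Hu]. split; [exact Hq|].
  intros W a b Hab.
  assert (Eab : a = b).
  { rewrite <- (comp_id_r _ _ _ a), <- Hd, comp_assoc, Hab, <- comp_assoc, Hc,
      comp_id_r. reflexivity. }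
  subst b. destruct (Hu W a Hab) as (u & Hu1 & Huniq).
  exists u. split; [split; exact Hu1|]. intros v Hv _. exact (Huniq v Hv).
Qed.

Section ExactMaltsev.
Hypotheses (HEx : Exact (C := C)) (HM : Maltsev (C := C)).

Lemma reflexive_graph_image_kernel_pair {P : C} (p1 p2 : Hom P C0) (h : Hom C1 P) :
  IsProduct p1 p2 -> comp p1 h = d -> comp p2 h = c ->
  exists (I : C) (m : Hom C1 I) (n : Hom I P) (Y : C) (f : Hom C0 Y),
    RegularEpi m /\ comp n m = h /\ IsPullback f f (comp p1 n) (comp p2 n).
Proof.
  destruct HEx as [HReg Heff]. destruct HM as [_ HMal].
  intros HP Hh1 Hh2.
  destruct (regular_image_factorization HReg h) as (I & m & n & Rm & Mn & Hnm).
  assert (Rfl : Reflexive (comp p1 n) (comp p2 n)).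
  { exists (comp m e).
    rewrite <- !comp_assoc, (comp_assoc _ _ _ _ _ n m e), Hnm, !comp_assoc, Hh1, Hh2.
    split; assumption. }
  pose proof (mono_into_product_relation p1 p2 n HP Mn) as Rel.
  destruct (Heff _ _ _ _ (HMal _ _ _ _ Rel Rfl)) as (Y & f & Hf).
  exists I, m, n, Y, f. auto.
Qed.

Lemma reflexive_graph_pushout_exists :
  exists (Q : C) (q1 q2 : Hom C0 Q), IsPushout d c q1 q2.
Proof.
  destruct (product_exists (proj1 HM) C0 C0) as (P & p1 & p2 & HP).
  destruct (HP C1 d c) as (h & [Hh1 Hh2] & _).
  destruct (reflexive_graph_image_kernel_pair p1 p2 h HP Hh1 Hh2)
    as (I & m & n & Y & f & Rm & Hnm & Hf).
  destruct HEx as [[_ [Hcoeq _]] _].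
  destruct (Hcoeq _ _ _ _ _ _ Hf) as (Q & q & Hq).
  pose proof (coequalizer_precomp_epi m _ _ q (regular_epi_epi m Rm) Hq) as Hdc.
  rewrite <- !comp_assoc, Hnm, Hh1, Hh2 in Hdc.
  exists Q, q, q. exact (reflexive_coequalizer_pushout q Hdc).
Qed.

Lemma regular_epi_of_zero_pushout {Q P : C} (q1 q2 : Hom C0 Q) (p1 p2 : Hom P C0)
    (h : Hom C1 P) :
  IsPushout d c q1 q2 -> IsProduct p1 p2 -> comp p1 h = d -> comp p2 h = c ->
  IsZeroObject Q -> RegularEpi h.
Proof.
  intros HQ HP Hh1 Hh2 [_ HQt].
  destruct (reflexive_graph_image_kernel_pair p1 p2 h HP Hh1 Hh2)
    as (I & m & n & Y & f & Rm & Hnm & Hf).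
  assert (Hfdc : comp f d = comp f c).
  { rewrite <- Hh1, <- Hh2, <- Hnm, !comp_assoc, <- (comp_assoc _ _ _ _ _ f p1 n),
      <- (comp_assoc _ _ _ _ _ f p2 n), (proj1 Hf). reflexivity. }
  destruct (proj2 HQ Y f f Hfdc) as (u & [Hu _] & _).
  pose proof (pullback_through_terminal_is_product f f _ _ u q1 q1
                HQt (eq_sym Hu) (eq_sym Hu) Hf) as HR.
  destruct (product_comparison_iso p1 p2 n HP HR) as (g & Hng & Hgn).
  rewrite <- Hnm. exact (regular_epi_comp_iso m n g Hng Hgn Rm).
Qed.

End ExactMaltsev.

Lemma zero_pushout_of_epi {Q P : C} (q1 q2 : Hom C0 Q) (p1 p2 : Hom P C0)
    (h : Hom C1 P) :
  Pointed (C := C) -> IsPushout d c q1 q2 -> IsProduct p1 p2 ->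
  comp p1 h = d -> comp p2 h = c -> Epi h -> IsZeroObject Q.
Proof.
  intros [Z HZ] HQ HP Hh1 Hh2 Eh.
  pose proof (reflexive_pushout_legs_eq q1 q2 HQ) as E12. subst q2.
  assert (Hq : comp q1 p1 = comp q1 p2).
  { apply Eh. rewrite <- !comp_assoc, Hh1, Hh2. exact (proj1 HQ). }
  destruct (factors_through_zero_of_coequalizes_projections p1 p2 q1 HZ HP Hq)
    as (t & w & Hq1).
  pose proof (reflexive_pushout_epi q1 q1 HQ) as Eq1. rewrite Hq1 in Eq1.
  exact (epi_through_zero_codomain_zero t w HZ Eq1).
Qed.

End ReflexiveGraph.
End Categories.

Theorem mainTheorem7 (C : Category) :
  Pointed (C := C) -> Exact (C := C) -> Maltsev (C := C) ->
  forall (C1 C0 : C) (d c : Hom C1 C0) (e : Hom C0 C1),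
    comp d e = idm C0 -> comp c e = idm C0 ->
    (exists (Q : C) (q1 q2 : Hom C0 Q), IsPushout d c q1 q2) /\
    (forall (Q : C) (q1 q2 : Hom C0 Q), IsPushout d c q1 q2 ->
     forall (P : C) (p1 p2 : Hom P C0), IsProduct p1 p2 ->
     forall h : Hom C1 P, comp p1 h = d -> comp p2 h = c ->
       (Epi h <-> IsZeroObject Q) /\ (Epi h -> RegularEpi h)).
Proof.
  intros HPt HEx HM C1 C0 d c e Hd Hc. split.
  - exact (reflexive_graph_pushout_exists d c e Hd Hc HEx HM).
  - intros Q q1 q2 HQ P p1 p2 HP h Hh1 Hh2.
    pose proof (zero_pushout_of_epi d c e Hd Hc q1 q2 p1 p2 h HPt HQ HP Hh1 Hh2)
      as Hzero.
    pose proof (regular_epi_of_zero_pushout d c e Hd Hc HEx HM q1 q2 p1 p2 h HQ HP Hh1 Hh2)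
      as Hreg.
    split; [split|].
    + exact Hzero.
    + intros HQz. exact (regular_epi_epi h (Hreg HQz)).
    + intros Eh. exact (Hreg (Hzero Eh)).
Qed.
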